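(* Fix an architecture $(\mathbf d,\mathbf k,\mathbf s)$ of depth $N$ and let $k_v=k_1+\sum_{i=2}^N(k_i-1)\prod_{m=1}^{i-1}s_m$. For every $T>0$ and all real numbers $\delta_1,\dots,\delta_{N-1}$ there exists a constant $\tau=\tau(T,k_v,\delta_1,\dots,\delta_{N-1})$ such that the following holds: whenever $\vec w=(w^{(1)},\dots,w^{(N)})$ with $w^{(i)}\in\mathbb{R}^{k_i}$ satisfies $\|\pi(\vec w)\|_1\le T$ and $\|w^{(i+1)}\|_2^2-\|w^{(i)}\|_2^2=\delta_i$ for $i=1,\dots,N-1$, then \[ \|w^{(i)}\|_2^2\le\tau\qquad\text{for all } i\in\{1,\dots,N\}. \]
   Context: An architecture of depth $N$ is a triple $(\mathbf d,\mathbf k,\mathbf s)=((d_0,\dots,d_N),(k_1,\dots,k_N),(s_1,\dots,s_N))$ of positive integers with $d_i=\frac{d_{i-1}-k_i}{s_i}+1$ for $i=1,\dots,N$. For a filter $w\in\mathbb{R}^{k}$ and stride $s$, the convolutional matrix $\Pi_{(d',d''),k,s}(w)\in\mathbb{R}^{d''\times d'}$ has entries $W_{j,(j-1)s+n}=w_n$ for $j\in\{1,\dots,d''\}$, $n\in\{1,\dots,k\}$, and zeros elsewhere. For $\vec w=(w^{(1)},\dots,w^{(N)})$, $\Pi(\vec w):=W_N\cdots W_1$ with $W_i=\Pi_{(d_{i-1},d_i),k_i,s_i}(w^{(i)})$; this is a convolutional matrix with stride $\prod_i s_i$ and filter width $k_v$, and its filter $v=\pi(\vec w)\in\mathbb{R}^{k_v}$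 is the final filter. Equivalently, $\sum_{j=0}^{k_v-1}v_{j+1}x^j=\prod_{i=1}^N\sum_{j=0}^{k_i-1}w^{(i)}_{j+1}x^{j\prod_{n=1}^{i-1}s_n}$. $\|\cdot\|_1$ and $\|\cdot\|_2$ are the usual vector norms. *)

From HB Require Import structures.
From mathcomp Require Import all_boot all_order all_algebra.
Set Implicit Arguments. Unset Strict Implicit. Unset Printing Implicit Defensive.
Import Order.TTheory GRing.Theory Num.Theory.
Local Open Scope ring_scope.

(* An architecture of depth N: d indexed by 0..N, k and s indexed by 1..N
   (values of d, k, s outside these ranges are irrelevant). *)
Definition is_architecture (N : nat) (d k s : nat -> nat) : Prop :=
  (forall i, (i <= N)%N -> (0 < d i)%N) /\
  (forall i, (1 <= i <= N)%N ->
     [/\ (0 < k i)%N, (0 < s i)%N, (k i <= d i.-1)%N,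
         (s i %| d i.-1 - k i)%N & d i = ((d i.-1 - k i) %/ s i).+1]).

Definition stride_before (s : nat -> nat) (i : nat) : nat :=
  (\prod_(1 <= m < i) s m)%N.

Definition kv (N : nat) (k s : nat -> nat) : nat :=
  (k 1 + \sum_(2 <= i < N.+1) (k i - 1) * stride_before s i)%N.

Definition layer_poly (R : nzRingType) (s : nat -> nat) (i : nat) (wi : seq R)
  : {poly R} :=
  \sum_(j < size wi) wi`_j *: 'X^(j * stride_before s i).

Definition final_poly (R : comNzRingType) (N : nat) (s : nat -> nat)
  (w : nat -> seq R) : {poly R} :=
  \prod_(1 <= i < N.+1) layer_poly s i (w i).

(* the final filter v = pi(w) in R^{k_v}: v_{j+1} = coefficient of x^j *)
Definition final_filter (R : comNzRingType) (N : nat) (k s : nat -> nat)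
  (w : nat -> seq R) : seq R :=
  mkseq (fun j => (final_poly N s w)`_j) (kv N k s).

Definition norm1 (R : numDomainType) (v : seq R) : R := \sum_(x <- v) `|x|.
Definition norm2sq (R : numDomainType) (v : seq R) : R := \sum_(x <- v) x ^+ 2.

From HB Require Import structures.
From mathcomp Require Import all_boot all_order all_algebra.
From mathcomp Require Import reals.
From mathcomp Require Import zify lra.
Import Order.TTheory GRing.Theory Num.Theory.
Local Open Scope ring_scope.

Set Implicit Arguments. Unset Strict Implicit. Unset Printing Implicit Defensive.

(* Sample polynomials at the points x_l = 1/(l+1), 0 <= l < N K, of [0, 1].
   By Lagrange interpolation, a polynomial f with at most K coefficients has,
   for each coefficient f_j, fewer than K sample points with C |f(x_l)| < |f_j|,
   where C depends only on the sample points.  Hence one sample point x_l is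
   good simultaneously for the N layer polynomials, each taken at the
   coefficient carrying the largest weight of its layer.  As the generating
   polynomial P of the final filter is the product of the layer polynomials,
   the product of these largest weights is at most
   C^N |P(x_l)| <= C^N ||v||_1 <= C^N T.  The balancedness conditions keep all
   the ||w^(i)||^2 within sum |delta_i| of each other, so if one of them were
   large, every largest weight would exceed both 1 and C^N T, contradicting
   this bound. *)

Lemma card_bigcup_leq (T : finType) (I : Type) (r : seq I) (P : pred I)
    (F : I -> {set T}) :
  (#|\bigcup_(i <- r | P i) F i| <= \sum_(i <- r | P i) #|F i|)%N.
Proof.
elim/big_ind2: _ => [|m A n B hA hB|//]; first by rewrite cards0.
exact: leq_trans (leq_card_setU A B).1 (leq_add hA hB).
Qed.

Lemma size_prod_seq_leq (R : nzSemiRingType) (I : Type) (r : seq I)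
    (P : pred I) (p : I -> {poly R}) :
  (size (\prod_(i <- r | P i) p i)%R <=
   (\sum_(i <- r | P i) (size (p i)).-1).+1)%N.
Proof.
elim: r => [|a r IH]; first by rewrite !big_nil size_poly1.
rewrite !big_cons; case: (P a) => //.
apply: leq_trans (size_polyMleq _ _) _; lia.
Qed.

Lemma norm_horner_le_norm1 (R : numDomainType) (p : {poly R}) (n : nat) (y : R) :
  `|y| <= 1 -> (size p <= n)%N -> `|p.[y]| <= norm1 (mkseq (fun j => p`_j) n).
Proof.
move=> y_le1 sp; rewrite (horner_coef_wide _ sp) /norm1 /mkseq big_map.
rewrite -(subn0 n) -/(index_iota 0 n) big_mkord subn0.
apply: le_trans (ler_norm_sum _ _ _) _; apply: ler_sum => j _.
by rewrite normrM normrX ler_piMr // exprn_ile1.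
Qed.

Lemma ler_first_prod_scaled (R : numDomainType) (N : nat) (a b : nat -> R)
    (C : R) :
  (0 < N)%N -> 0 <= C -> (forall j, (1 <= j <= N)%N -> 1 <= a j <= C * b j) ->
  a 1%N <= C ^+ N * \prod_(1 <= j < N.+1) b j.
Proof.
move=> N_gt0 C_ge0 hab.
have a_ge1 j : (1 <= j <= N)%N -> 1 <= a j by case/hab/andP.
apply: le_trans (_ : \prod_(1 <= j < N.+1) a j <= _).
  rewrite big_ltn // ler_peMr ?(le_trans ler01) ?a_ge1 //.
  rewrite big_seq; apply: (big_ind (fun y => 1 <= y)) => // [y z|j].
    exact: mulr_ege1.
  by rewrite mem_index_iota => jN; apply: a_ge1; lia.
rewrite -[N in C ^+ N](subn0 N) -subSS -prodr_const_nat -big_split /=.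
rewrite !big_nat; apply: ler_prod => j /hab/andP[a_ge1' ->].
by rewrite (le_trans ler01).
Qed.

Lemma dist_le_sum_increments (R : numDomainType) (N : nat) (r delta : nat -> R) :
    (forall l, (1 <= l <= N.-1)%N -> r l.+1 - r l = delta l) ->
  forall i j, (1 <= i <= N)%N -> (1 <= j <= N)%N ->
  `|r j - r i| <= \sum_(1 <= l < N) `|delta l|.
Proof.
move=> hr i j; wlog ij : i j / (i <= j)%N => [hwlog hi hj|hi hj].
  by case: (leqP i j) => [/hwlog|/ltnW/hwlog]; [apply | rewrite distrC; apply].
rewrite -telescope_sumr // (@eq_big_nat _ _ _ _ _ _ delta); last first.
  by move=> l lj; apply: hr; lia.
apply: le_trans (ler_norm_sum _ _ _) _.
rewrite [X in _ <= X](big_cat_nat (n := i)) /=; try lia.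
rewrite [X in _ <= _ + X](big_cat_nat (n := j)) /=; try lia.
by rewrite addrCA lerDl addr_ge0 // sumr_ge0.
Qed.

(* The elements of B, padded with the fresh indices M + i >= M so as to be
   injective on all of nat, as lagrange requires. *)
Definition first_nodes (M : nat) (B : {set 'I_M}) (i : nat) : nat :=
  if (i < #|B|)%N then nth 0%N [seq val l | l <- enum B] i else (M + i)%N.

Lemma first_nodes_mem (M : nat) (B : {set 'I_M}) (i : nat) :
  (i < #|B|)%N -> exists2 l, l \in B & first_nodes B i = val l.
Proof.
move=> iB; rewrite /first_nodes iB.
have : nth 0%N [seq val l | l <- enum B] i \in [seq val l | l <- enum B].
  by rewrite mem_nth // size_map -cardE.
by case/mapP => l; rewrite mem_enum => lB ->; exists l.
Qed.

Lemma first_nodes_inj (M : nat) (B : {set 'I_M}) : injective (first_nodes B).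
Proof.
have lt_M i : (i < #|B|)%N -> (first_nodes B i < M)%N.
  by case/first_nodes_mem => l _ ->; apply: ltn_ord.
move=> i i' eq_ii'; have := lt_M i; have := lt_M i'; move: eq_ii'.
rewrite /first_nodes; case: ltnP => iB; case: ltnP => i'B //; try lia.
move/eqP; rewrite nth_uniq ?size_map -?cardE //; first by move/eqP.
by rewrite map_inj_uniq ?enum_uniq //; apply: val_inj.
Qed.

Section LagrangeSampling.
Variable R : realFieldType.

Definition lagrange_coef_norm (n : nat) (y : nat -> R) (j : nat) : R :=
  \sum_(i < n) `|(tnth (lagrange n y) i)`_j|.

Lemma lagrange_coef_norm_ge0 n y j : 0 <= lagrange_coef_norm n y j.
Proof. exact: sumr_ge0. Qed.

Lemma exists_sample_coef_le (n : nat) (y : nat -> R) (p : {poly R}) (j : nat) :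
  (0 < n)%N -> injective y -> (size p <= n)%N ->
  exists i : 'I_n, `|p`_j| <= lagrange_coef_norm n y j * `|p.[y i]|.
Proof.
move=> n_gt0 y_inj sp.
have [i _ i_max] :=
  @arg_maxP _ _ _ (Ordinal n_gt0) xpredT (fun i : 'I_n => `|p.[y i]|) isT.
exists i; rewrite {1}(lagrange_gen n_gt0 y_inj sp) coef_sum.
apply: le_trans (ler_norm_sum _ _ _) _; rewrite mulr_suml.
apply: ler_sum => i' _; rewrite coefCM normrM mulrC.
by apply: ler_wpM2l => //; apply: i_max.
Qed.

Variable x : nat -> R.
Hypothesis x_inj : injective x.

Definition sampling_const (M n : nat) : R :=
  \sum_(B : {set 'I_M}) \sum_(j < n) lagrange_coef_norm n (x \o first_nodes B) j.

Lemma sampling_const_ge0 M n : 0 <= sampling_const M n.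
Proof.
by apply: sumr_ge0 => B _; apply: sumr_ge0 => j _; apply: lagrange_coef_norm_ge0.
Qed.

Lemma lagrange_coef_norm_le_sampling_const M n (B : {set 'I_M}) j :
  (j < n)%N -> lagrange_coef_norm n (x \o first_nodes B) j <= sampling_const M n.
Proof.
move=> jn; rewrite /sampling_const (bigD1 B) //= (bigD1 (Ordinal jn)) //= -addrA.
rewrite lerDl addr_ge0 //; apply: sumr_ge0 => *; first exact: sumr_ge0.
by apply: sumr_ge0 => *; apply: sumr_ge0.
Qed.

Definition bad_samples M n (p : {poly R}) (j : nat) : {set 'I_M} :=
  [set l : 'I_M | sampling_const M n * `|p.[x l]| < `|p`_j|].

Lemma card_bad_samples_lt M n (p : {poly R}) j :
  (size p <= n)%N -> (j < n)%N -> (#|bad_samples M n p j| < n)%N.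
Proof.
move=> sp jn; set B := bad_samples M n p j; rewrite ltnNge; apply/negP => nB.
have y_inj : injective (x \o first_nodes B).
  by apply: inj_comp x_inj _; apply: first_nodes_inj.
have [i] := exists_sample_coef_le j (leq_ltn_trans (leq0n j) jn) y_inj sp.
have [l lB /= ->] := first_nodes_mem (leq_trans (ltn_ord i) nB).
move: lB; rewrite inE => /lt_le_trans bad_l /bad_l; rewrite ltNge ler_wpM2r //.
exact: lagrange_coef_norm_le_sampling_const.
Qed.

Lemma exists_common_good_sample M n N (p : nat -> {poly R}) (j : nat -> nat) :
    (0 < N)%N -> (N * n <= M)%N ->
    (forall i, (1 <= i <= N)%N -> (size (p i) <= n)%N /\ (j i < n)%N) ->
  exists l : 'I_M, forall i, (1 <= i <= N)%N ->
    `|(p i)`_(j i)| <= sampling_const M n * `|(p i).[x l]|.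
Proof.
move=> N_gt0 NnM hp.
pose U := \bigcup_(1 <= i < N.+1) bad_samples M n (p i) (j i).
have card_U : (#|U| < M)%N.
  apply: leq_ltn_trans (card_bigcup_leq _ _ _) _.
  apply: (@leq_ltn_trans (\sum_(1 <= i < N.+1) n.-1)).
    rewrite big_nat [X in (_ <= X)%N]big_nat; apply: leq_sum => i /hp[sp jn].
    by rewrite -ltnS prednK ?card_bad_samples_lt //; apply: leq_ltn_trans jn.
  have [_ j1n] := hp 1%N N_gt0.
  rewrite sum_nat_const_nat subSS subn0; nia.
have : (0 < #|~: U|)%N by have := cardsC U; rewrite card_ord; lia.
rewrite card_gt0 => /set0Pn[l]; rewrite inE => lU; exists l => i iN.
rewrite leNgt; apply: contra lU => bad_l.
by rewrite /U (bigD1_seq i) ?mem_index_iota ?iota_uniq //= in_setU inE bad_l.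
Qed.

End LagrangeSampling.

Section Peak.
Variable R : realDomainType.

Definition peak (v : seq R) : nat :=
  [arg max_(j > ord0 : 'I_(size v).-1.+1) v`_j ^+ 2]%O.

Lemma peak_lt_size (v : seq R) : (0 < size v)%N -> (peak v < size v)%N.
Proof. by move=> v_gt0; rewrite -(prednK v_gt0) ltn_ord. Qed.

Lemma norm2sq_le_peak (v : seq R) : norm2sq v <= (size v)%:R * v`_(peak v) ^+ 2.
Proof.
rewrite /norm2sq (big_nth 0) big_mkord mulr_natl.
rewrite -[X in _ *+ X]card_ord -sumr_const /peak; case: arg_maxP => // p _ p_max.
by apply: ler_sum => j _; apply: (p_max (widen_ord (leqSpred _) j)).
Qed.

Lemma peak_gt (v : seq R) (n : nat) (a : R) :
  0 <= a -> (size v <= n)%N -> n%:R * (1 + a ^+ 2) < norm2sq v ->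
  1 < `|v`_(peak v)| /\ a < `|v`_(peak v)|.
Proof.
move=> a_ge0 vn v_big; have := norm2sq_le_peak v.
rewrite -(real_normK (num_real v`_(peak v))); set c := `|_| => peak_big.
have c_ge0 : 0 <= c by apply: normr_ge0.
have n_ge0 : 0 <= n%:R :> R by apply: ler0n.
have vn' : (size v)%:R <= n%:R :> R by rewrite ler_nat.
have : n%:R * (1 + a ^+ 2) < n%:R * c ^+ 2.
  by apply: lt_le_trans (le_trans peak_big (ler_wpM2r (sqr_ge0 c) vn')).
move=> nc_big; have c2_big : 1 + a ^+ 2 < c ^+ 2 by nra.
split; nra.
Qed.

End Peak.

Lemma coef_layer_poly (R : nzRingType) (s : nat -> nat) (i : nat) (wi : seq R)
    (j : nat) :
  (0 < stride_before s i)%N -> (j < size wi)%N ->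
  (layer_poly s i wi)`_(j * stride_before s i) = wi`_j.
Proof.
move=> st_gt0 j_lt; rewrite /layer_poly coef_sum (bigD1 (Ordinal j_lt)) //=.
rewrite coefZ coefXn eqxx mulr1 big1 ?addr0 // => j' j'_neq.
rewrite coefZ coefXn eqn_pmul2r // eq_sym.
by move: j'_neq; rewrite -val_eqE /= => /negPf ->; rewrite mulr0.
Qed.

Lemma size_layer_poly (R : nzRingType) (s : nat -> nat) (i : nat) (wi : seq R) :
  (size (layer_poly s i wi) <= ((size wi).-1 * stride_before s i).+1)%N.
Proof.
apply/leq_sizeP => n n_ge; rewrite /layer_poly coef_sum big1 // => j _.
have : (j * stride_before s i <= (size wi).-1 * stride_before s i)%N.
  by apply: leq_mul => //; have := ltn_ord j; lia.
by move=> j_le; rewrite coefZ coefXn; case: eqP => [?|_]; [lia | rewrite mulr0].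
Qed.

Section Architecture.
Variables (N : nat) (d k s : nat -> nat).
Hypothesis arch : is_architecture N d k s.

Lemma stride_before_gt0 i : (i <= N.+1)%N -> (0 < stride_before s i)%N.
Proof.
move=> iN; rewrite /stride_before big_seq; apply: prodn_cond_gt0 => m.
by rewrite mem_index_iota => mi; have [] := arch.2 m ltac:(lia).
Qed.

Lemma kv_eq_sum : (0 < N)%N ->
  kv N k s = (\sum_(1 <= i < N.+1) (k i).-1 * stride_before s i).+1.
Proof.
move=> N_gt0; have [k1_gt0 _ _ _ _] := arch.2 1%N ltac:(lia).
have st1 : stride_before s 1 = 1%N by rewrite /stride_before big_geq.
rewrite /kv [in RHS]big_ltn ?ltnS // st1 muln1.
under eq_bigr => i _ do rewrite subn1.
lia.
Qed.

Lemma layer_span_lt_kv i : (1 <= i <= N)%N ->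
  ((k i).-1 * stride_before s i < kv N k s)%N.
Proof.
move=> iN; rewrite kv_eq_sum ?ltnS; last by lia.
by rewrite (bigD1_seq i) ?mem_index_iota ?iota_uniq //= leq_addr.
Qed.

Lemma k_le_kv i : (1 <= i <= N)%N -> (k i <= kv N k s)%N.
Proof.
move=> iN; have st_gt0 : (0 < stride_before s i)%N.
  by apply: stride_before_gt0; lia.
have := layer_span_lt_kv iN; have := leq_pmulr (k i).-1 st_gt0; lia.
Qed.

Lemma size_layer_poly_le_kv (R : nzRingType) (wi : seq R) i :
  (1 <= i <= N)%N -> size wi = k i -> (size (layer_poly s i wi) <= kv N k s)%N.
Proof.
move=> iN size_wi; apply: leq_trans (size_layer_poly _ _ _) _.
by rewrite size_wi layer_span_lt_kv.
Qed.

Lemma peak_offset_lt_kv (R : realDomainType) (wi : seq R) i :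
  (1 <= i <= N)%N -> size wi = k i -> (peak wi * stride_before s i < kv N k s)%N.
Proof.
move=> iN size_wi; apply: leq_ltn_trans (layer_span_lt_kv iN); rewrite leq_mul2r.
have [k_gt0 _ _ _ _] := arch.2 i iN.
by apply/orP; right; rewrite -ltnS prednK // -size_wi peak_lt_size ?size_wi.
Qed.

Lemma coef_layer_poly_peak (R : realDomainType) (wi : seq R) i :
  (1 <= i <= N)%N -> size wi = k i ->
  (layer_poly s i wi)`_(peak wi * stride_before s i) = wi`_(peak wi).
Proof.
move=> iN size_wi; have [k_gt0 _ _ _ _] := arch.2 i iN.
rewrite coef_layer_poly ?peak_lt_size ?size_wi //.
by apply: stride_before_gt0; lia.
Qed.

Lemma norm_horner_final_le_norm1 (R : numDomainType) (w : nat -> seq R) (y : R) :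
  (0 < N)%N -> (forall i, (1 <= i <= N)%N -> size (w i) = k i) -> `|y| <= 1 ->
  `|(final_poly N s w).[y]| <= norm1 (final_filter N k s w).
Proof.
move=> N_gt0 size_w y_le1; apply: norm_horner_le_norm1 => //.
apply: leq_trans (size_prod_seq_leq _ _ _) _.
rewrite kv_eq_sum // ltnS big_nat [X in (_ <= X)%N]big_nat.
apply: leq_sum => i iN; have := size_layer_poly s i (w i).
by rewrite size_w //; case: (size _).
Qed.

End Architecture.

Unset Implicit Arguments. Set Strict Implicit. Set Printing Implicit Defensive.

Theorem lemma3p5 (R : realType) (N K : nat) (T : R) (delta : nat -> R) :
  0 < T ->
  exists tau : R,
    forall (d k s : nat -> nat),
      is_architecture N d k s -> kv N k s = K ->
      forall w : nat -> seq R,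
        (forall i, (1 <= i <= N)%N -> size (w i) = k i) ->
        norm1 (final_filter N k s w) <= T ->
        (forall i, (1 <= i <= N.-1)%N ->
           norm2sq (w i.+1) - norm2sq (w i) = delta i) ->
        forall i, (1 <= i <= N)%N -> norm2sq (w i) <= tau.
Proof.
move=> T_gt0.
pose x (l : nat) : R := l.+1%:R^-1.
have x_inj : injective x.
  by move=> a b /invr_inj /eqP; rewrite eqr_nat eqSS => /eqP.
have x_le1 l : `|x l| <= 1 by rewrite ger0_norm ?invr_ge0 // invf_le1 ?ler1n.
pose C := sampling_const x (N * K) K.
have C_ge0 : 0 <= C := sampling_const_ge0 x _ _.
pose A := T * C ^+ N.
have A_ge0 : 0 <= A by rewrite mulr_ge0 ?exprn_ge0 // ltW.
exists (K%:R * (1 + A ^+ 2) + \sum_(1 <= l < N) `|delta l|).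
move=> d k s arch kvK w size_w norm1_le hdelta i iN.
rewrite leNgt; apply/negP => big_i; have N_gt0 : (0 < N)%N by lia.
pose f j := layer_poly s j (w j).
pose e j := (peak (w j) * stride_before s j)%N.
have [l good] : exists l : 'I_(N * K), forall j, (1 <= j <= N)%N ->
    `|(f j)`_(e j)| <= C * `|(f j).[x l]|.
  apply: exists_common_good_sample => // j jN; rewrite -kvK.
  exact: conj (size_layer_poly_le_kv arch jN (size_w j jN))
    (peak_offset_lt_kv arch jN (size_w j jN)).
have coef_big j : (1 <= j <= N)%N -> 1 < `|(f j)`_(e j)| /\ A < `|(f j)`_(e j)|.
  move=> jN; rewrite /f /e (coef_layer_poly_peak arch jN (size_w j jN)).
  apply: (peak_gt (n := K)) => //; first by rewrite size_w // -kvK (k_le_kv arch).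
  have := dist_le_sum_increments hdelta iN jN.
  by rewrite ler_norml => /andP[+ _]; lra.
have : A < A.
  apply: lt_le_trans (coef_big 1%N N_gt0).2 _.
  pose a j := `|(f j)`_(e j)|; pose b j := `|(f j).[x l]|.
  apply: le_trans (@ler_first_prod_scaled _ N a b C N_gt0 C_ge0 _) _.
    by move=> j jN; rewrite good // andbT; apply: ltW (coef_big j jN).1.
  rewrite -normr_prod -horner_prod /A mulrC ler_wpM2r ?exprn_ge0 //.
  by apply: le_trans norm1_le; apply: (norm_horner_final_le_norm1 arch).
by rewrite ltxx.
Qed.
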